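(* Let $N\ge1$, $K_{des}>0$, and let $\Omega_P,\Omega_S\subset[0,\pi]$ be disjoint nonempty closed sets, each a finite union of closed intervals of positive length. With $\Delta_{P,res}(K)$ as defined below, and $$\Delta_P(K)=\frac{8K_{des}^2K}{K^2+16K_{des}^4-8K_{des}^2},$$ there exists exactly one $K\ge 4K_{des}(K_{des}+1)$ such that $\Delta_{P,res}(K)=\Delta_P(K)$. Moreover, on $[4K_{des}(K_{des}+1),\infty)$ one has $\Delta_{P,res}(K)<\Delta_P(K)$ for $K$ smaller than this value and $\Delta_{P,res}(K)>\Delta_P(K)$ for $K$ larger than it.
   Context: Let $D(\omega)=1$ on $\Omega_P$ and $D(\omega)=0$ on $\Omega_S$. For $K>0$ let $W_K(\omega)=1$ on $\Omega_P$ and $W_K(\omega)=K$ on $\Omega_S$, and $$\Delta_{P,res}(K)=\min_{c_0,\dots,c_N\in\mathbb{R}}\ \max_{\omega\in\Omega_P\cup\Omega_S}\Bigl|W_K(\omega)\Bigl(\sum_{n=0}^N c_n\cos(n\omega)-D(\omega)\Bigr)\Bigr|,$$ the minimax weighted error of the optimal even-symmetric (zero-phase) sequence of order $2N$ approximating $D$ with weight $W_K$. *)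

From Stdlib Require Import Reals Lra List ClassicalEpsilon.
Open Scope R_scope.

Definition in_band (L : list (R * R)) (w : R) : Prop :=
  exists p, In p L /\ fst p <= w <= snd p.

Definition good_band (L : list (R * R)) : Prop :=
  L <> nil /\ forall p, In p L -> 0 <= fst p /\ fst p < snd p /\ snd p <= PI.

Definition cospoly (N : nat) (c : nat -> R) (w : R) : R :=
  sum_f_R0 (fun n => c n * cos (INR n * w)) N.

(* Desired response D (1 on Omega_P, 0 on Omega_S) and weight W_K
   (1 on Omega_P, K on Omega_S); meaningful on the (disjoint) union. *)
Definition Dresp (LP : list (R * R)) (w : R) : R :=
  if excluded_middle_informative (in_band LP w) then 1 else 0.

Definition Wght (LP : list (R * R)) (K w : R) : R :=
  if excluded_middle_informative (in_band LP w) then 1 else K.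

Definition werr (LP : list (R * R)) (N : nat) (K : R) (c : nat -> R) (w : R) : R :=
  Rabs (Wght LP K w * (cospoly N c w - Dresp LP w)).

Definition is_max_err (LP LS : list (R * R)) (N : nat) (K : R) (c : nat -> R) (e : R) : Prop :=
  (forall w, (in_band LP w \/ in_band LS w) -> werr LP N K c w <= e) /\
  (exists w, (in_band LP w \/ in_band LS w) /\ werr LP N K c w = e).

Definition is_minimax (LP LS : list (R * R)) (N : nat) (K d : R) : Prop :=
  (exists c, is_max_err LP LS N K c d) /\
  (forall c e, is_max_err LP LS N K c e -> d <= e).

Definition Delta_P_res (LP LS : list (R * R)) (N : nat) (K : R) : R :=
  epsilon (inhabits 0) (is_minimax LP LS N K).

Definition Delta_P (Kdes K : R) : R :=
  8 * Kdes ^ 2 * K / (K ^ 2 + 16 * Kdes ^ 4 - 8 * Kdes ^ 2).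

(* The minimax error [d K = Delta_P_res K] exists by compactness: on a passband
   interval a cosine polynomial controls its coefficients, so the weighted error is
   coercive, and a Lipschitz function attains its minimum on a box. Comparing optimal
   filters for [K <= K'] gives [d K <= d K' <= (K'/K) d K], so [d] is nondecreasing
   and continuous; it is positive because a filter vanishing on a stopband interval
   is zero. The constant filter [1/(K+1)] gives [d K <= K/(K+1)], which at the
   threshold [L0 = 4 Kdes (Kdes+1)] equals [Delta_P L0], while [Delta_P] is strictly
   decreasing on [[L0, oo)] and decays like [1/K]. Hence [d - Delta_P] is strictly
   increasing, nonpositive at [L0] and eventually positive: it has exactly one zero. *)

From Stdlib Require Import Reals Lra Lia List ClassicalEpsilon.
Open Scope R_scope.

Lemma Rabs_le_between a b : Rabs a <= b -> - b <= a <= b.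
Proof. unfold Rabs; destruct (Rcase_abs a); lra. Qed.

Lemma Rabs_le_0 a : Rabs a <= 0 -> a = 0.
Proof. unfold Rabs; destruct (Rcase_abs a); lra. Qed.

Lemma lipschitz_continuity_pt f x r L : 0 < r ->
  (forall y, Rabs (y - x) < r -> Rabs (f y - f x) <= L * Rabs (y - x)) ->
  continuity_pt f x.
Proof.
  intros Hr Hlip eps Heps.
  pose proof (Rabs_pos L) as HL.
  set (delta := Rmin r (eps / (Rabs L + 1))).
  assert (Hdr : delta <= r) by apply Rmin_l.
  assert (Hde : delta <= eps / (Rabs L + 1)) by apply Rmin_r.
  assert (Hde' : delta * (Rabs L + 1) <= eps).
  { apply Rmult_le_reg_r with (/ (Rabs L + 1)); [apply Rinv_0_lt_compat; lra|].
    rewrite Rmult_assoc, Rinv_r by lra. lra. }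
  exists delta. split.
  { apply Rmin_pos; [lra|]. apply Rdiv_lt_0_compat; lra. }
  intros y [_ Hy]. simpl in *. unfold R_dist in *.
  specialize (Hlip y ltac:(lra)).
  pose proof (Rabs_pos (y - x)). pose proof (Rle_abs L). nra.
Qed.

Lemma continuity_pt_Rabs f x :
  continuity_pt f x -> continuity_pt (fun y => Rabs (f y)) x.
Proof. intros Hf. exact (continuity_pt_comp f Rabs x Hf (Rcontinuity_abs _)). Qed.

Lemma argmax_le n (g : nat -> R) :
  exists k, (k <= n)%nat /\ forall i, (i <= n)%nat -> g i <= g k.
Proof.
  induction n as [|n [k [Hk Hmax]]].
  - exists 0%nat. split; [lia|]. intros i Hi. replace i with 0%nat by lia. lra.
  - destruct (Rle_dec (g (S n)) (g k)).
    + exists k. split; [lia|]. intros i Hi.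
      destruct (Nat.eq_dec i (S n)) as [->|]; [lra|]. apply Hmax; lia.
    + exists (S n). split; [lia|]. intros i Hi.
      destruct (Nat.eq_dec i (S n)) as [->|]; [lra|].
      pose proof (Hmax i ltac:(lia)). lra.
Qed.

Lemma pos_bound_uniform (P : nat -> R -> Prop) N :
  (forall k a a', P k a -> 0 < a' <= a -> P k a') ->
  (forall k, (k <= N)%nat -> exists a, 0 < a /\ P k a) ->
  exists a, 0 < a /\ forall k, (k <= N)%nat -> P k a.
Proof.
  intros Hmono Hk. induction N as [|N IH].
  - destruct (Hk 0%nat ltac:(lia)) as [a [Ha Hp]]. exists a. split; [lra|].
    intros k Hk'. replace k with 0%nat by lia. exact Hp.
  - destruct IH as [a [Ha Hp]]; [intros k Hk'; apply Hk; lia|].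
    destruct (Hk (S N) ltac:(lia)) as [b [Hb Hpb]].
    pose proof (Rmin_l a b). pose proof (Rmin_r a b). pose proof (Rmin_pos a b Ha Hb).
    exists (Rmin a b). split; [lra|]. intros k Hk'.
    destruct (Nat.eq_dec k (S N)) as [->|].
    + apply Hmono with b; [exact Hpb|lra].
    + apply Hmono with a; [apply Hp; lia|lra].
Qed.

Fixpoint sum_below (n : nat) (g : nat -> R) : R :=
  match n with O => 0 | S m => sum_below m g + g m end.

Lemma sum_below_ext n g h :
  (forall i, (i < n)%nat -> g i = h i) -> sum_below n g = sum_below n h.
Proof.
  induction n as [|n IH]; simpl; intros H; [reflexivity|].
  rewrite IH by (intros; apply H; lia). rewrite H by lia. reflexivity.
Qed.

Lemma sum_f_R0_sum_below g N : sum_f_R0 g N = sum_below (S N) g.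
Proof. induction N as [|N IH]; simpl; [lra|]. simpl in IH. rewrite IH. reflexivity. Qed.

Definition dist1 n (c c' : nat -> R) : R := sum_below n (fun i => Rabs (c i - c' i)).

Lemma dist1_sym n c c' : dist1 n c c' = dist1 n c' c.
Proof. apply sum_below_ext. intros. apply Rabs_minus_sym. Qed.

Lemma dist1_eq_0 n c c' : (forall i, (i < n)%nat -> c i = c' i) -> dist1 n c c' = 0.
Proof.
  intros H. unfold dist1. induction n as [|n IH]; simpl; [reflexivity|].
  rewrite IH by (intros; apply H; lia). rewrite H by lia. unfold Rminus. rewrite Rplus_opp_r, Rabs_R0. ring.
Qed.

Definition inbox n (lo hi c : nat -> R) : Prop :=
  forall i, (i < n)%nat -> lo i <= c i <= hi i.

Definition upd (c : nat -> R) n x : nat -> R := fun i => if Nat.eqb i n then x else c i.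

Lemma dist1_upd n c c' x y :
  dist1 (S n) (upd c n x) (upd c' n y) = dist1 n c c' + Rabs (x - y).
Proof.
  unfold dist1, upd. simpl. rewrite Nat.eqb_refl. f_equal.
  apply sum_below_ext. intros i Hi. destruct (Nat.eqb_spec i n); [lia|reflexivity].
Qed.

Lemma min_family_lipschitz {A : Type} (g : R -> A -> R) (S : A -> Prop) (m : R -> A) L :
  (forall x, S (m x) /\ forall a, S a -> g x (m x) <= g x a) ->
  (forall x y a, Rabs (g x a - g y a) <= L * Rabs (x - y)) ->
  forall x y, Rabs (g x (m x) - g y (m y)) <= L * Rabs (x - y).
Proof.
  intros Hm Hg.
  assert (Hone : forall x y, g x (m x) <= g y (m y) + L * Rabs (x - y)).
  { intros x y. destruct (Hm x) as [_ Hx]. destruct (Hm y) as [Hy _].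
    pose proof (Hx (m y) Hy). pose proof (Rabs_le_between _ _ (Hg x y (m y))). lra. }
  intros x y. apply Rabs_le. pose proof (Hone x y). pose proof (Hone y x).
  rewrite (Rabs_minus_sym y x) in *. lra.
Qed.

(* Minimising one coordinate at a time: the partial minimum over the first [n]
   coordinates is again Lipschitz in the last one, so it attains its minimum. *)
Lemma lipschitz_min_on_box n : forall (f : (nat -> R) -> R) L lo hi,
  0 <= L -> (forall i, lo i <= hi i) ->
  (forall c c', Rabs (f c - f c') <= L * dist1 n c c') ->
  exists cs, inbox n lo hi cs /\ forall c, inbox n lo hi c -> f cs <= f c.
Proof.
  induction n as [|n IH]; intros f L lo hi HL Hlh Hf.
  - exists lo. split; [intros i Hi; lia|]. intros c _.
    specialize (Hf c lo). unfold dist1 in Hf; simpl in Hf.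
    rewrite Rmult_0_r in Hf. apply Rabs_le_0 in Hf. lra.
  - set (g x c := f (upd c n x)).
    assert (Hmin : forall x, exists cs, inbox n lo hi cs /\
                     forall c, inbox n lo hi c -> g x cs <= g x c).
    { intros x. apply (IH (g x) L lo hi HL Hlh). intros c c'. unfold g.
      rewrite <- (Rplus_0_r (dist1 n c c')), <- (Rabs_R0), <- (Rminus_diag x), <- dist1_upd.
      apply Hf. }
    destruct (choice _ Hmin) as [m Hm].
    assert (Hh : forall x y, Rabs (g x (m x) - g y (m y)) <= L * Rabs (x - y)).
    { apply (min_family_lipschitz g (inbox n lo hi) m L Hm). intros x y c. unfold g.
      rewrite <- (Rplus_0_l (Rabs (x - y))), <- (dist1_eq_0 n c c) by reflexivity.
      rewrite <- dist1_upd. apply Hf. }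
    destruct (continuity_ab_min (fun x => g x (m x)) (lo n) (hi n) (Hlh n))
      as [xs [Hxs Hxs_in]].
    { intros x _. apply (lipschitz_continuity_pt _ x 1 L); [lra|]. intros y _. apply Hh. }
    exists (upd (m xs) n xs). split.
    + intros i Hi. unfold upd. destruct (Nat.eqb_spec i n) as [->|]; [exact Hxs_in|].
      apply (proj1 (Hm xs)). lia.
    + intros c Hc.
      assert (Hfc : f c = g (c n) c).
      { unfold g. specialize (Hf c (upd c n (c n))).
        rewrite dist1_eq_0, Rmult_0_r in Hf.
        - apply Rabs_le_0 in Hf. lra.
        - intros i _. unfold upd. destruct (Nat.eqb_spec i n) as [->|]; reflexivity. }
      rewrite Hfc. apply Rle_trans with (g (c n) (m (c n))).
      * apply Hxs. apply Hc. lia.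
      * apply (proj2 (Hm (c n))). intros i Hi. apply Hc. lia.
Qed.
Lemma derivable_pt_lim_scal_cos (c k w : R) :
  derivable_pt_lim (fun w => c * cos (k * w)) w (- c * k * sin (k * w)).
Proof.
  pose proof (derivable_pt_lim_scal id k w 1 (derivable_pt_lim_id w)) as Hkw.
  pose proof (derivable_pt_lim_comp _ cos w _ _ Hkw (derivable_pt_lim_cos _)) as Hcos.
  pose proof (derivable_pt_lim_scal _ c w _ Hcos) as H.
  unfold mult_real_fct, comp, id in H.
  replace (- c * k * sin (k * w)) with (c * (- sin (k * w) * (k * 1))) by ring.
  exact H.
Qed.

Lemma derivable_pt_lim_scal_sin (c k w : R) :
  derivable_pt_lim (fun w => c * sin (k * w)) w (c * k * cos (k * w)).
Proof.
  pose proof (derivable_pt_lim_scal id k w 1 (derivable_pt_lim_id w)) as Hkw.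
  pose proof (derivable_pt_lim_comp _ sin w _ _ Hkw (derivable_pt_lim_sin _)) as Hsin.
  pose proof (derivable_pt_lim_scal _ c w _ Hsin) as H.
  unfold mult_real_fct, comp, id in H.
  replace (c * k * cos (k * w)) with (c * (cos (k * w) * (k * 1))) by ring.
  exact H.
Qed.

Definition cospoly_d1 N c w : R := sum_f_R0 (fun n => - c n * INR n * sin (INR n * w)) N.
Definition cospoly_d2 N c w : R := sum_f_R0 (fun n => - c n * INR n ^ 2 * cos (INR n * w)) N.

Lemma derivable_pt_lim_cospoly N c w : derivable_pt_lim (cospoly N c) w (cospoly_d1 N c w).
Proof.
  unfold cospoly, cospoly_d1. induction N as [|N IH]; simpl.
  - apply derivable_pt_lim_scal_cos.
  - apply (derivable_pt_lim_plus (fun w => sum_f_R0 (fun n => c n * cos (INR n * w)) N)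
      (fun w => c (S N) * cos (INR (S N) * w))); [exact IH|apply derivable_pt_lim_scal_cos].
Qed.

Lemma derivable_pt_lim_cospoly_d1 N c w :
  derivable_pt_lim (cospoly_d1 N c) w (cospoly_d2 N c w).
Proof.
  assert (Hterm : forall n, derivable_pt_lim (fun w => - c n * INR n * sin (INR n * w)) w
                              (- c n * INR n ^ 2 * cos (INR n * w))).
  { intros n. replace (- c n * INR n ^ 2 * cos (INR n * w))
      with ((- c n * INR n) * INR n * cos (INR n * w)) by ring.
    apply derivable_pt_lim_scal_sin. }
  unfold cospoly_d1, cospoly_d2. induction N as [|N IH]; simpl; [apply Hterm|].
  apply (derivable_pt_lim_plus
    (fun w => sum_f_R0 (fun n => - c n * INR n * sin (INR n * w)) N)
    (fun w => - c (S N) * INR (S N) * sin (INR (S N) * w))); [exact IH|apply Hterm].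
Qed.

Lemma derivable_pt_lim_zero_on_interval f a b x l :
  a < x < b -> (forall w, a < w < b -> f w = 0) -> derivable_pt_lim f x l -> l = 0.
Proof.
  intros Hx Hz Hd.
  apply (uniqueness_limite (fun _ => 0) x); [|apply derivable_pt_lim_const].
  exact (derivable_pt_lim_locally_ext f _ x a b l Hx Hz Hd).
Qed.

Lemma sum_f_R0_null g N : (forall i, (i <= N)%nat -> g i = 0) -> sum_f_R0 g N = 0.
Proof.
  induction N as [|N IH]; simpl; intros H; [apply H; lia|].
  rewrite IH by (intros; apply H; lia). rewrite H by lia. ring.
Qed.

Lemma cospoly_null N c w : (forall i, (i <= N)%nat -> c i = 0) -> cospoly N c w = 0.
Proof. intros H. apply sum_f_R0_null. intros i Hi. rewrite H by exact Hi. ring. Qed.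

Lemma cospoly_const N t w : cospoly N (fun n => if Nat.eqb n 0 then t else 0) w = t.
Proof.
  unfold cospoly. induction N as [|N IH]; simpl.
  - rewrite Rmult_0_l, cos_0. ring.
  - rewrite IH. ring.
Qed.

Lemma cospoly_div N c d w : cospoly N (fun i => c i / d) w = cospoly N c w / d.
Proof. unfold cospoly, Rdiv. induction N as [|N IH]; simpl; [|rewrite IH]; ring. Qed.

(* [cos (n w)] is an eigenfunction of [d^2/dw^2] with eigenvalue [-n^2]. *)
Lemma cospoly_d2_eigen N c K w :
  cospoly N (fun n => c n * (K - INR n ^ 2)) w = cospoly_d2 N c w + K * cospoly N c w.
Proof.
  unfold cospoly, cospoly_d2; cbv beta.
  induction N as [|N IH]; [simpl; ring|]. rewrite !tech5, IH. ring.
Qed.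

Lemma top_coef_zero N c x :
  (forall i, (i <= N)%nat -> c i = 0) ->
  cospoly (S N) c x = 0 -> cospoly_d1 (S N) c x = 0 -> c (S N) = 0.
Proof.
  intros Hlow Hc Hd. unfold cospoly, cospoly_d1 in *. rewrite tech5 in Hc, Hd.
  rewrite sum_f_R0_null, Rplus_0_l in Hc, Hd by (intros; rewrite Hlow by assumption; ring).
  assert (HN : INR (S N) <> 0) by (apply not_0_INR; lia).
  pose proof (sin2_cos2 (INR (S N) * x)) as Hpyth. unfold Rsqr in Hpyth.
  apply Rmult_integral in Hc as [Hc|Hcos]; [exact Hc|].
  apply Rmult_integral in Hd as [Hd|Hsin].
  - apply Rmult_integral in Hd as [Hd|]; [lra|contradiction].
  - rewrite Hcos, Hsin in Hpyth. lra.
Qed.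

Lemma cospoly_zero_on_interval N : forall c a b, a < b ->
  (forall w, a < w < b -> cospoly N c w = 0) -> forall i, (i <= N)%nat -> c i = 0.
Proof.
  induction N as [|N IH]; intros c a b Hab Hz i Hi.
  - replace i with 0%nat by lia. specialize (Hz ((a + b) / 2) ltac:(lra)).
    unfold cospoly in Hz; simpl in Hz. rewrite Rmult_0_l, cos_0 in Hz. lra.
  - assert (Hd1 : forall w, a < w < b -> cospoly_d1 (S N) c w = 0).
    { intros w Hw. exact (derivable_pt_lim_zero_on_interval _ a b w _ Hw Hz
        (derivable_pt_lim_cospoly _ _ _)). }
    assert (Hd2 : forall w, a < w < b -> cospoly_d2 (S N) c w = 0).
    { intros w Hw. exact (derivable_pt_lim_zero_on_interval _ a b w _ Hw Hd1
        (derivable_pt_lim_cospoly_d1 _ _ _)). }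
    set (c2 n := c n * (INR (S N) ^ 2 - INR n ^ 2)).
    assert (Hz2 : forall w, a < w < b -> cospoly N c2 w = 0).
    { intros w Hw. pose proof (cospoly_d2_eigen (S N) c (INR (S N) ^ 2) w) as E.
      rewrite Hd2, Hz, Rmult_0_r, Rplus_0_r in E by exact Hw.
      unfold cospoly in E. rewrite tech5, Rminus_diag, Rmult_0_r, Rmult_0_l, Rplus_0_r in E.
      exact E. }
    assert (Hlow : forall j, (j <= N)%nat -> c j = 0).
    { intros j Hj. pose proof (IH c2 a b Hab Hz2 j Hj) as E. unfold c2 in E.
      apply Rmult_integral in E as [E|E]; [exact E|].
      assert (INR j < INR (S N)) by (apply lt_INR; lia).
      pose proof (pos_INR j). nra. }
    destruct (Nat.eq_dec i (S N)) as [->|]; [|apply Hlow; lia].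
    apply (top_coef_zero N c ((a + b) / 2) Hlow); [apply Hz|apply Hd1]; lra.
Qed.

Lemma continuity_pt_cospoly N c w : continuity_pt (cospoly N c) w.
Proof. apply derivable_continuous_pt. exists (cospoly_d1 N c w). apply derivable_pt_lim_cospoly. Qed.

Lemma cospoly_lipschitz N c c' w :
  Rabs (cospoly N c w - cospoly N c' w) <= dist1 (S N) c c'.
Proof.
  replace (cospoly N c w - cospoly N c' w)
    with (sum_f_R0 (fun n => (c n - c' n) * cos (INR n * w)) N).
  2:{ unfold cospoly. induction N as [|N IH]; [simpl; ring|]. rewrite !tech5, IH. ring. }
  unfold dist1. rewrite <- sum_f_R0_sum_below.
  eapply Rle_trans; [apply sum_f_R0_triangle|].
  apply sum_Rle. intros n _. rewrite Rabs_mult.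
  pose proof (COS_bound (INR n * w)).
  assert (Rabs (cos (INR n * w)) <= 1) by (apply Rabs_le; lra).
  pose proof (Rabs_pos (c n - c' n)). nra.
Qed.

Section Coercivity.
Variables (N : nat) (a b : R).
Hypothesis Hab : a < b.

Definition is_supnorm c v : Prop :=
  (exists w, a <= w <= b /\ Rabs (cospoly N c w) = v) /\
  forall w, a <= w <= b -> Rabs (cospoly N c w) <= v.

Definition supnorm c : R := epsilon (inhabits 0) (is_supnorm c).

Lemma supnorm_spec c : is_supnorm c (supnorm c).
Proof.
  unfold supnorm. apply epsilon_spec.
  destruct (continuity_ab_maj (fun w => Rabs (cospoly N c w)) a b) as [M [HM HMab]].
  - lra.
  - intros w _. apply continuity_pt_Rabs, continuity_pt_cospoly.
  - exists (Rabs (cospoly N c M)). split; [exists M|]; auto.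
Qed.

Lemma supnorm_lipschitz c c' : Rabs (supnorm c - supnorm c') <= 1 * dist1 (S N) c c'.
Proof.
  assert (Hone : forall c c', supnorm c <= supnorm c' + dist1 (S N) c c').
  { intros c1 c2. destruct (supnorm_spec c1) as [[w [Hw <-]] _].
    destruct (supnorm_spec c2) as [_ Hmax]. specialize (Hmax w Hw).
    pose proof (cospoly_lipschitz N c1 c2 w).
    pose proof (Rabs_triang_inv (cospoly N c1 w) (cospoly N c2 w)). lra. }
  rewrite Rmult_1_l. apply Rabs_le.
  pose proof (Hone c c'). pose proof (Hone c' c). rewrite (dist1_sym _ c' c) in *. lra.
Qed.

(* Every nonzero coefficient vector rescales into one of these boxes, with [k] an
   index of maximal modulus. *)
Definition unit_box k : (nat -> R) -> Prop :=
  inbox (S N) (fun j => if Nat.eqb j k then 1 else -1) (fun _ => 1).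

Lemma supnorm_pos_on_unit_box k : (k <= N)%nat ->
  exists al, 0 < al /\ forall c, unit_box k c -> al <= supnorm c.
Proof.
  intros Hk.
  destruct (lipschitz_min_on_box (S N) supnorm 1
              (fun j => if Nat.eqb j k then 1 else -1) (fun _ => 1)) as [cs [Hcs Hmin]].
  - lra.
  - intros i. destruct (Nat.eqb i k); lra.
  - apply supnorm_lipschitz.
  - exists (supnorm cs). split; [|exact Hmin].
    destruct (supnorm_spec cs) as [_ Hmax].
    assert (H0 : 0 <= supnorm cs)
      by (eapply Rle_trans; [apply Rabs_pos|apply (Hmax a)]; lra).
    destruct H0 as [|H0]; [assumption|exfalso].
    assert (Hz : forall w, a < w < b -> cospoly N cs w = 0).
    { intros w Hw. apply Rabs_le_0. rewrite H0. apply Hmax. lra. }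
    pose proof (cospoly_zero_on_interval N cs a b Hab Hz k Hk) as Hcsk.
    specialize (Hcs k ltac:(lia)); cbv beta in Hcs. rewrite Nat.eqb_refl in Hcs. lra.
Qed.

Lemma supnorm_coercive :
  exists al, 0 < al /\ forall c i, (i <= N)%nat -> al * Rabs (c i) <= supnorm c.
Proof.
  destruct (pos_bound_uniform (fun k al => forall c, unit_box k c -> al <= supnorm c) N)
    as [al [Hal Hall]].
  - intros k a0 a1 H Ha c Hc. specialize (H c Hc). lra.
  - exact supnorm_pos_on_unit_box.
  - exists al. split; [exact Hal|]. intros c.
    destruct (argmax_le N (fun i => Rabs (c i))) as [k [Hk Hmax]]. simpl in Hmax.
    destruct (Req_dec (c k) 0) as [Hz|Hnz].
    { intros i Hi. specialize (Hmax i Hi). rewrite Hz, Rabs_R0 in Hmax.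
      pose proof (Rabs_pos (c i)). destruct (supnorm_spec c) as [[w [_ <-]] _].
      pose proof (Rabs_pos (cospoly N c w)). nra. }
    pose proof (Rabs_pos_lt _ Hnz) as Hck.
    set (c' i := c i / c k).
    assert (Hbox : unit_box k c').
    { intros i Hi. unfold c'. destruct (Nat.eqb_spec i k) as [->|].
      - rewrite Rdiv_diag by exact Hnz. lra.
      - apply Rabs_le_between. unfold Rdiv. rewrite Rabs_mult, Rabs_inv.
        apply Rmult_le_reg_r with (Rabs (c k)); [exact Hck|].
        rewrite Rmult_assoc, Rinv_l by lra. specialize (Hmax i ltac:(lia)). lra. }
    assert (Hscaled : al * Rabs (c k) <= supnorm c).
    { pose proof (Hall k Hk c' Hbox) as Hc'.
      destruct (supnorm_spec c') as [[w [Hw Hw_eq]] _].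
      destruct (supnorm_spec c) as [_ Hmax_c]. specialize (Hmax_c w Hw).
      replace (cospoly N c' w) with (cospoly N c w * / c k) in Hw_eq
        by (symmetry; apply cospoly_div).
      rewrite Rabs_mult, Rabs_inv in Hw_eq.
      apply Rle_trans with (supnorm c' * Rabs (c k)); [apply Rmult_le_compat_r; lra|].
      rewrite <- Hw_eq, Rmult_assoc, Rinv_l by lra. lra. }
    intros i Hi. specialize (Hmax i Hi). nra.
Qed.

Lemma cospoly_coercive : exists al, 0 < al /\ forall c, exists w, a <= w <= b /\
  forall i, (i <= N)%nat -> al * Rabs (c i) <= Rabs (cospoly N c w).
Proof.
  destruct supnorm_coercive as [al [Hal Hco]]. exists al. split; [exact Hal|].
  intros c. destruct (supnorm_spec c) as [[w [Hw Hw_eq]] _].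
  exists w. split; [exact Hw|]. rewrite Hw_eq. auto.
Qed.

End Coercivity.

Lemma good_band_interval L : good_band L ->
  exists p, In p L /\ 0 <= fst p /\ fst p < snd p /\ snd p <= PI.
Proof.
  intros [Hne Hin]. destruct L as [|p L]; [congruence|].
  exists p. split; [left; reflexivity|]. apply Hin. left. reflexivity.
Qed.

Lemma continuous_max_on_band L (g : R -> R) : good_band L ->
  (forall w, continuity_pt g w) ->
  exists w0, in_band L w0 /\ forall w, in_band L w -> g w <= g w0.
Proof.
  intros [Hne Hin] Hg. induction L as [|p L IH]; [congruence|].
  destruct (Hin p (or_introl eq_refl)) as [_ [Hp _]].
  destruct (continuity_ab_maj g (fst p) (snd p)) as [M [HM HMp]]; [lra|auto|].
  assert (HMband : in_band (p :: L) M) by (exists p; split; [left|]; auto).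
  destruct L as [|q L].
  - exists M. split; [exact HMband|]. intros w [p' [[<-|[]] Hw]]. auto.
  - destruct IH as [w1 [[p1 [Hp1 Hw1]] Hmax1]].
    + congruence.
    + intros p' Hp'. apply Hin. right. exact Hp'.
    + assert (Hall : forall w, in_band (p :: q :: L) w -> g w <= Rmax (g M) (g w1)).
      { intros w [p' [[<-|Hp'] Hw]].
        - pose proof (HM w Hw). pose proof (Rmax_l (g M) (g w1)). lra.
        - pose proof (Hmax1 w (ex_intro _ p' (conj Hp' Hw))).
          pose proof (Rmax_r (g M) (g w1)). lra. }
      destruct (Rle_dec (g M) (g w1)).
      * exists w1. split; [exists p1; split; [right|]; auto|].
        rewrite Rmax_right in Hall by lra. exact Hall.
      * exists M. split; [exact HMband|]. rewrite Rmax_left in Hall by lra. exact Hall.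
Qed.

Section Minimax.
Variables (LP LS : list (R * R)) (N : nat).
Hypothesis HP : good_band LP.
Hypothesis HS : good_band LS.
Hypothesis Hdisj : forall w, ~ (in_band LP w /\ in_band LS w).

Let in_bands w := in_band LP w \/ in_band LS w.

Lemma werr_passband K c w : in_band LP w -> werr LP N K c w = Rabs (cospoly N c w - 1).
Proof.
  intros Hw. unfold werr, Wght, Dresp.
  destruct (excluded_middle_informative (in_band LP w)); [|contradiction]. f_equal. ring.
Qed.

Lemma werr_stopband K c w : in_band LS w -> werr LP N K c w = Rabs K * Rabs (cospoly N c w).
Proof.
  intros Hw. unfold werr, Wght, Dresp.
  destruct (excluded_middle_informative (in_band LP w)) as [Hp|].
  - exfalso. exact (Hdisj w (conj Hp Hw)).
  - rewrite <- Rabs_mult. f_equal. ring.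
Qed.

Lemma max_err_exists K c : exists e, is_max_err LP LS N K c e.
Proof.
  destruct (continuous_max_on_band LP (fun w => Rabs (cospoly N c w - 1)) HP)
    as [w1 [Hw1 Hmax1]].
  { intros w. apply continuity_pt_Rabs, continuity_pt_minus;
      [apply continuity_pt_cospoly|apply continuity_pt_const; intros ??; reflexivity]. }
  destruct (continuous_max_on_band LS (fun w => Rabs K * Rabs (cospoly N c w)) HS)
    as [w2 [Hw2 Hmax2]].
  { intros w. apply continuity_pt_scal, continuity_pt_Rabs, continuity_pt_cospoly. }
  destruct (Rle_dec (Rabs (cospoly N c w1 - 1)) (Rabs K * Rabs (cospoly N c w2))).
  - exists (Rabs K * Rabs (cospoly N c w2)). split.
    + intros w [Hw|Hw]; [rewrite werr_passband by exact Hw; specialize (Hmax1 w Hw); lra|].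
      rewrite werr_stopband by exact Hw. apply Hmax2, Hw.
    + exists w2. split; [right; exact Hw2|]. apply werr_stopband, Hw2.
  - exists (Rabs (cospoly N c w1 - 1)). split.
    + intros w [Hw|Hw]; [rewrite werr_passband by exact Hw; apply Hmax1, Hw|].
      rewrite werr_stopband by exact Hw. specialize (Hmax2 w Hw). lra.
    + exists w1. split; [left; exact Hw1|]. apply werr_passband, Hw1.
Qed.

Lemma max_err_unique K c e e' :
  is_max_err LP LS N K c e -> is_max_err LP LS N K c e' -> e = e'.
Proof.
  intros [Hle [w [Hw <-]]] [Hle' [w' [Hw' <-]]].
  specialize (Hle w' Hw'). specialize (Hle' w Hw). lra.
Qed.

Definition max_err K c : R := epsilon (inhabits 0) (is_max_err LP LS N K c).

Lemma max_err_spec K c : is_max_err LP LS N K c (max_err K c).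
Proof. unfold max_err. apply epsilon_spec, max_err_exists. Qed.

Lemma werr_lipschitz K c c' w : in_bands w ->
  werr LP N K c w <= werr LP N K c' w + (1 + Rabs K) * dist1 (S N) c c'.
Proof.
  intros Hw. pose proof (cospoly_lipschitz N c c' w) as Hlip.
  pose proof (Rabs_pos (cospoly N c w - cospoly N c' w)). pose proof (Rabs_pos K).
  destruct Hw as [Hw|Hw].
  - rewrite !werr_passband by exact Hw.
    pose proof (Rabs_triang (cospoly N c' w - 1) (cospoly N c w - cospoly N c' w)) as T.
    replace (cospoly N c' w - 1 + (cospoly N c w - cospoly N c' w))
      with (cospoly N c w - 1) in T by ring.
    nra.
  - rewrite !werr_stopband by exact Hw.
    pose proof (Rabs_triang_inv (cospoly N c w) (cospoly N c' w)). nra.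
Qed.

Lemma max_err_lipschitz K c c' :
  Rabs (max_err K c - max_err K c') <= (1 + Rabs K) * dist1 (S N) c c'.
Proof.
  assert (Hone : forall c c', max_err K c <= max_err K c' + (1 + Rabs K) * dist1 (S N) c c').
  { intros c1 c2. destruct (max_err_spec K c1) as [_ [w [Hw <-]]].
    destruct (max_err_spec K c2) as [Hmax _].
    pose proof (werr_lipschitz K c1 c2 w Hw). specialize (Hmax w Hw). lra. }
  apply Rabs_le. pose proof (Hone c c'). pose proof (Hone c' c).
  rewrite (dist1_sym _ c' c) in *. lra.
Qed.

(* A large coefficient forces a large passband error, by coercivity on one
   passband interval. *)
Lemma max_err_coercive :
  exists al, 0 < al /\ forall K c i, (i <= N)%nat -> al * Rabs (c i) <= 1 + max_err K c.
Proof.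
  destruct (good_band_interval LP HP) as [p [Hp [_ [Hab _]]]].
  destruct (cospoly_coercive N (fst p) (snd p) Hab) as [al [Hal Hco]].
  exists al. split; [exact Hal|]. intros K c i Hi.
  destruct (Hco c) as [w [Hw Hbound]].
  assert (HwP : in_band LP w) by (exists p; auto).
  destruct (max_err_spec K c) as [Hmax _].
  specialize (Hmax w (or_introl HwP)). rewrite werr_passband in Hmax by exact HwP.
  pose proof (Rabs_triang_inv (cospoly N c w) 1). rewrite Rabs_R1 in *.
  specialize (Hbound i Hi). lra.
Qed.

Lemma max_err_null_le_1 K : max_err K (fun _ => 0) <= 1.
Proof.
  destruct (max_err_spec K (fun _ => 0)) as [_ [w [[Hw|Hw] <-]]].
  - rewrite werr_passband, cospoly_null by auto. rewrite Rminus_0_l, Rabs_Ropp, Rabs_R1. lra.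
  - rewrite werr_stopband, cospoly_null, Rabs_R0 by auto. lra.
Qed.

(* Outside the box [[-2/al, 2/al]^(N+1)] the error exceeds that of the zero filter,
   so the minimum over that compact box is the global one. *)
Lemma minimax_exists K : exists d, is_minimax LP LS N K d.
Proof.
  destruct max_err_coercive as [al [Hal Hco]].
  set (M := 2 / al).
  assert (HM : 0 < M) by (apply Rdiv_lt_0_compat; lra).
  destruct (lipschitz_min_on_box (S N) (max_err K) (1 + Rabs K) (fun _ => - M) (fun _ => M))
    as [cs [Hcs Hmin]].
  - pose proof (Rabs_pos K). lra.
  - intros. lra.
  - apply max_err_lipschitz.
  - exists (max_err K cs). split; [exists cs; apply max_err_spec|].
    intros c e He. rewrite <- (max_err_unique K c _ _ (max_err_spec K c) He).
    destruct (Rle_dec (max_err K c) 1) as [Hle|Hgt].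
    + apply Hmin. intros i Hi. apply Rabs_le_between.
      apply Rmult_le_reg_l with al; [exact Hal|].
      unfold M. rewrite Rmult_div_assoc, Rmult_div_r by lra.
      specialize (Hco K c i ltac:(lia)). lra.
    + assert (Hzero : inbox (S N) (fun _ => - M) (fun _ => M) (fun _ => 0)) by (intros ??; lra).
      pose proof (Hmin _ Hzero). pose proof (max_err_null_le_1 K). lra.
Qed.

Lemma Delta_P_res_spec K : is_minimax LP LS N K (Delta_P_res LP LS N K).
Proof. unfold Delta_P_res. apply epsilon_spec, minimax_exists. Qed.

Lemma Delta_P_res_attained K :
  exists c, forall w, in_bands w -> werr LP N K c w <= Delta_P_res LP LS N K.
Proof. destruct (Delta_P_res_spec K) as [[c [Hmax _]] _]. exists c. exact Hmax. Qed.

Lemma Delta_P_res_le_bound K c e :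
  (forall w, in_bands w -> werr LP N K c w <= e) -> Delta_P_res LP LS N K <= e.
Proof.
  intros Hc. destruct (Delta_P_res_spec K) as [_ Hmin].
  destruct (max_err_spec K c) as [_ [w [Hw Hw_eq]]].
  apply Rle_trans with (max_err K c); [apply (Hmin c), max_err_spec|].
  rewrite <- Hw_eq. apply Hc, Hw.
Qed.

Lemma Delta_P_res_le_mono K K' : 0 <= K <= K' ->
  Delta_P_res LP LS N K <= Delta_P_res LP LS N K'.
Proof.
  intros HK. destruct (Delta_P_res_attained K') as [c Hc].
  apply (Delta_P_res_le_bound K c). intros w Hw. specialize (Hc w Hw).
  destruct Hw as [Hw|Hw].
  - rewrite werr_passband in Hc |- * by exact Hw. exact Hc.
  - rewrite werr_stopband in Hc |- * by exact Hw. rewrite !Rabs_pos_eq in * by lra.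
    pose proof (Rabs_pos (cospoly N c w)). nra.
Qed.

Lemma Delta_P_res_scale K K' : 0 < K <= K' ->
  Delta_P_res LP LS N K' <= K' / K * Delta_P_res LP LS N K.
Proof.
  intros HK. destruct (Delta_P_res_attained K) as [c Hc].
  assert (Hratio : 1 <= K' / K).
  { apply Rmult_le_reg_r with K; [lra|]. unfold Rdiv. rewrite Rmult_assoc, Rinv_l; lra. }
  apply (Delta_P_res_le_bound K' c). intros w Hw. specialize (Hc w Hw).
  destruct Hw as [Hw|Hw].
  - rewrite werr_passband in Hc |- * by exact Hw.
    pose proof (Rabs_pos (cospoly N c w - 1)). nra.
  - rewrite werr_stopband in Hc |- * by exact Hw. rewrite !Rabs_pos_eq in * by lra.
    replace (K' * Rabs (cospoly N c w)) with (K' / K * (K * Rabs (cospoly N c w)))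
      by (field; lra).
    apply Rmult_le_compat_l; lra.
Qed.

(* A zero error would make the filter vanish on a stopband interval, hence vanish
   identically, contradicting [D = 1] on the passband. *)
Lemma Delta_P_res_pos K : 0 < K -> 0 < Delta_P_res LP LS N K.
Proof.
  intros HK. destruct (Delta_P_res_attained K) as [c Hc].
  apply Rnot_le_lt. intros Hle.
  destruct (good_band_interval LS HS) as [p [Hp [_ [Hab _]]]].
  assert (Hz : forall w, fst p < w < snd p -> cospoly N c w = 0).
  { intros w Hw. assert (HwS : in_band LS w) by (exists p; split; [|lra]; exact Hp).
    specialize (Hc w (or_intror HwS)). rewrite werr_stopband, Rabs_pos_eq in Hc by (exact HwS || lra).
    apply Rabs_le_0. pose proof (Rabs_pos (cospoly N c w)). nra. }
  pose proof (cospoly_zero_on_interval N c _ _ Hab Hz) as Hnull.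
  destruct (good_band_interval LP HP) as [q [Hq [_ [Hq2 _]]]].
  assert (HqP : in_band LP (fst q)) by (exists q; split; [|lra]; exact Hq).
  specialize (Hc _ (or_introl HqP)).
  rewrite werr_passband, cospoly_null, Rminus_0_l, Rabs_Ropp, Rabs_R1 in Hc by assumption.
  lra.
Qed.

(* The constant filter [1/(K+1)] equalises the passband and stopband errors. *)
Lemma Delta_P_res_le K : 0 <= K -> Delta_P_res LP LS N K <= K / (K + 1).
Proof.
  intros HK.
  assert (Hinv : 0 <= 1 / (K + 1))
    by (apply Rmult_le_pos; [lra|apply Rlt_le, Rinv_0_lt_compat; lra]).
  apply (Delta_P_res_le_bound K (fun n => if Nat.eqb n 0 then 1 / (K + 1) else 0)).
  intros w [Hw|Hw].
  - rewrite werr_passband, cospoly_const by exact Hw.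
    replace (1 / (K + 1) - 1) with (- (K * (1 / (K + 1)))) by (field; lra).
    rewrite Rabs_Ropp, Rabs_pos_eq by nra. right. field. lra.
  - rewrite werr_stopband, cospoly_const, !Rabs_pos_eq by (exact Hw || lra).
    right. field. lra.
Qed.

Lemma Delta_P_res_increment K K' : 0 < K <= K' ->
  0 <= Delta_P_res LP LS N K' - Delta_P_res LP LS N K <= (K' - K) / K.
Proof.
  intros HK. pose proof (Delta_P_res_le_mono K K' ltac:(lra)).
  pose proof (Delta_P_res_scale K K' HK). pose proof (Delta_P_res_le K ltac:(lra)).
  pose proof (Delta_P_res_pos K ltac:(lra)).
  assert (Hle1 : K / (K + 1) <= 1)
    by (apply Rmult_le_reg_r with (K + 1); [lra|]; field_simplify; lra).
  replace (K' / K * Delta_P_res LP LS N K)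
    with (Delta_P_res LP LS N K + (K' - K) / K * Delta_P_res LP LS N K) in * by (field; lra).
  assert (0 <= (K' - K) / K)
    by (apply Rmult_le_pos; [lra|apply Rlt_le, Rinv_0_lt_compat; lra]).
  split; [lra|]. nra.
Qed.

Lemma Delta_P_res_continuous K : 0 < K -> continuity_pt (Delta_P_res LP LS N) K.
Proof.
  intros HK. apply (lipschitz_continuity_pt _ K (K / 2) (2 / K)); [lra|].
  intros y Hy. apply Rlt_le, Rabs_le_between in Hy.
  destruct (Rle_dec K y).
  - pose proof (Delta_P_res_increment K y ltac:(lra)).
    rewrite !Rabs_pos_eq by lra.
    apply Rle_trans with ((y - K) / K); [lra|].
    unfold Rdiv. assert (0 < / K) by (apply Rinv_0_lt_compat; lra). nra.
  - pose proof (Delta_P_res_increment y K ltac:(lra)).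
    rewrite Rabs_minus_sym, (Rabs_minus_sym y K), !Rabs_pos_eq by lra.
    apply Rle_trans with ((K - y) / y); [lra|].
    apply Rmult_le_reg_r with (y * K); [nra|].
    unfold Rdiv. field_simplify; nra.
Qed.

End Minimax.

Section DeltaP.
Variable Kd : R.
Hypothesis HKd : 0 < Kd.
Let L0 := 4 * Kd * (Kd + 1).

Lemma Delta_P_denom_ge K : L0 <= K -> K ^ 2 / 2 <= K ^ 2 + 16 * Kd ^ 4 - 8 * Kd ^ 2.
Proof.
  intros HK. assert (0 < L0) by (unfold L0; nra).
  assert (L0 * L0 <= K * K) by nra. unfold L0 in *. nra.
Qed.

Lemma Delta_P_denom_pos K : L0 <= K -> 0 < K ^ 2 + 16 * Kd ^ 4 - 8 * Kd ^ 2.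
Proof.
  intros HK. pose proof (Delta_P_denom_ge K HK).
  assert (0 < L0) by (unfold L0; nra). nra.
Qed.

(* At [K = L0] the denominator equals [8 Kd^2 (2 Kd + 1)^2 = 8 Kd^2 (L0 + 1)]. *)
Lemma Delta_P_threshold : Delta_P Kd L0 = L0 / (L0 + 1).
Proof.
  pose proof (Delta_P_denom_pos L0 (Rle_refl _)).
  unfold Delta_P, L0 in *. field. split; nra.
Qed.

Lemma Delta_P_decreasing K K' : L0 <= K < K' -> Delta_P Kd K' < Delta_P Kd K.
Proof.
  intros HK. pose proof (Delta_P_denom_pos K ltac:(lra)) as HdK.
  pose proof (Delta_P_denom_pos K' ltac:(lra)) as HdK'.
  assert (HL0 : 0 < L0) by (unfold L0; nra).
  unfold Delta_P. set (q := 16 * Kd ^ 4 - 8 * Kd ^ 2) in *.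
  replace (K ^ 2 + 16 * Kd ^ 4 - 8 * Kd ^ 2) with (K ^ 2 + q) in * by (unfold q; ring).
  replace (K' ^ 2 + 16 * Kd ^ 4 - 8 * Kd ^ 2) with (K' ^ 2 + q) in * by (unfold q; ring).
  assert (Hq : q < K * K') by (unfold q, L0 in *; nra).
  apply Rmult_lt_reg_r with ((K ^ 2 + q) * (K' ^ 2 + q)); [nra|].
  unfold Rdiv. field_simplify; [|lra|lra].
  assert (0 < Kd ^ 2) by nra.
  assert (0 < 8 * Kd ^ 2 * ((K' - K) * (K * K' - q))) by (repeat apply Rmult_lt_0_compat; lra).
  nra.
Qed.

Lemma Delta_P_le_inv K : L0 <= K -> Delta_P Kd K <= 16 * Kd ^ 2 / K.
Proof.
  intros HK. pose proof (Delta_P_denom_ge K HK). pose proof (Delta_P_denom_pos K HK).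
  assert (HL0 : 0 < L0) by (unfold L0; nra).
  unfold Delta_P, Rdiv.
  apply Rmult_le_reg_r with ((K ^ 2 + 16 * Kd ^ 4 - 8 * Kd ^ 2) * K); [nra|].
  field_simplify; [|lra|lra].
  assert (0 < Kd ^ 2) by nra. nra.
Qed.

Lemma Delta_P_continuous K : L0 <= K -> continuity_pt (Delta_P Kd) K.
Proof. intros HK. pose proof (Delta_P_denom_pos K HK). unfold Delta_P. reg. lra. Qed.

End DeltaP.

Lemma increasing_unique_zero (g : R -> R) a b : a <= b ->
  (forall x y, a <= x < y -> g x < g y) ->
  (forall x, a <= x <= b -> continuity_pt g x) ->
  g a <= 0 -> 0 < g b ->
  exists x0, a <= x0 /\ g x0 = 0 /\ (forall x, a <= x -> g x = 0 -> x = x0) /\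
    (forall x, a <= x < x0 -> g x < 0) /\ (forall x, x0 < x -> 0 < g x).
Proof.
  intros Hle Hinc Hcont Ha Hb.
  assert (Hzero : exists x0, a <= x0 /\ g x0 = 0).
  { destruct Ha as [Ha|Ha]; [|exists a; split; [lra|exact Ha]].
    assert (Hab : a < b) by (destruct Hle as [|<-]; lra).
    destruct (Ranalysis5.IVT_interv g a b Hcont Hab Ha Hb) as [x0 [Hx0 Hg0]].
    exists x0. split; [lra|exact Hg0]. }
  destruct Hzero as [x0 [Hx0 Hg0]].
  exists x0. repeat split; [exact Hx0|exact Hg0| | |].
  - intros x Hx Hgx. destruct (Rtotal_order x x0) as [Hlt|[Heq|Hgt]]; [|exact Heq|].
    + pose proof (Hinc x x0 (conj Hx Hlt)). lra.
    + pose proof (Hinc x0 x (conj Hx0 Hgt)). lra.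
  - intros x Hx. pose proof (Hinc x x0 Hx). lra.
  - intros x Hx. pose proof (Hinc x0 x (conj Hx0 Hx)). lra.
Qed.

(* [Delta_P] decays like [1/K] while [Delta_P_res] is nondecreasing and positive. *)
Lemma Delta_P_lt_Delta_P_res_eventually LP LS N Kd :
  good_band LP -> good_band LS -> (forall w, ~ (in_band LP w /\ in_band LS w)) -> 0 < Kd ->
  exists K, 4 * Kd * (Kd + 1) <= K /\ Delta_P Kd K < Delta_P_res LP LS N K.
Proof.
  intros HP HS Hdisj HKd.
  set (L0 := 4 * Kd * (Kd + 1)). assert (HL0 : 0 < L0) by (unfold L0; nra).
  set (delta := Delta_P_res LP LS N L0).
  assert (Hdelta : 0 < delta) by (apply Delta_P_res_pos; assumption).
  set (K := L0 + 1 + 16 * Kd ^ 2 / delta).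
  assert (Hq : 0 <= 16 * Kd ^ 2 / delta)
    by (apply Rmult_le_pos; [nra|apply Rlt_le, Rinv_0_lt_compat; lra]).
  exists K. split; [unfold K; lra|].
  pose proof (Delta_P_le_inv Kd HKd K ltac:(unfold K, L0 in *; lra)).
  pose proof (Delta_P_res_le_mono LP LS N HP HS Hdisj L0 K ltac:(unfold K; lra)).
  assert (16 * Kd ^ 2 / K < delta).
  { apply Rmult_lt_reg_r with K; [unfold K; lra|].
    unfold Rdiv at 1. rewrite Rmult_assoc, Rinv_l by (unfold K; lra).
    replace (delta * K) with (delta * (L0 + 1) + 16 * Kd ^ 2) by (unfold K; field; lra).
    nra. }
  unfold delta in *. lra.
Qed.

Theorem mainTheorem3 (N : nat) (Kdes : R) (LP LS : list (R * R)) :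
  (1 <= N)%nat -> 0 < Kdes ->
  good_band LP -> good_band LS ->
  (forall w, ~ (in_band LP w /\ in_band LS w)) ->
  exists K0, 4 * Kdes * (Kdes + 1) <= K0 /\
    Delta_P_res LP LS N K0 = Delta_P Kdes K0 /\
    (forall K, 4 * Kdes * (Kdes + 1) <= K ->
       Delta_P_res LP LS N K = Delta_P Kdes K -> K = K0) /\
    (forall K, 4 * Kdes * (Kdes + 1) <= K < K0 ->
       Delta_P_res LP LS N K < Delta_P Kdes K) /\
    (forall K, K0 < K -> Delta_P_res LP LS N K > Delta_P Kdes K).
Proof.
  intros _ HKd HP HS Hdisj.
  assert (HL0 : 0 < 4 * Kdes * (Kdes + 1)) by nra.
  destruct (Delta_P_lt_Delta_P_res_eventually LP LS N Kdes HP HS Hdisj HKd) as [Kb [HKb Hgap]].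
  destruct (increasing_unique_zero (fun K => Delta_P_res LP LS N K - Delta_P Kdes K)
                                    (4 * Kdes * (Kdes + 1)) Kb)
    as [K0 [HK0 [Hzero [Huniq [Hbelow Habove]]]]]; cbv beta in *.
  - exact HKb.
  - intros K K' HK.
    pose proof (Delta_P_res_le_mono LP LS N HP HS Hdisj K K' ltac:(lra)).
    pose proof (Delta_P_decreasing Kdes HKd K K' HK). lra.
  - intros K HK. apply continuity_pt_minus.
    + apply Delta_P_res_continuous; assumption || lra.
    + apply Delta_P_continuous; [exact HKd|lra].
  - rewrite Delta_P_threshold by exact HKd.
    pose proof (Delta_P_res_le LP LS N HP HS Hdisj (4 * Kdes * (Kdes + 1)) ltac:(lra)). lra.
  - lra.
  - exists K0. split; [exact HK0|]. split; [lra|]. split; [|split].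
    + intros K HK HE. apply Huniq; lra.
    + intros K HK. pose proof (Hbelow K HK). lra.
    + intros K HK. pose proof (Habove K HK). lra.
Qed.
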